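(* Let $d,k\ge 1$, let $\pi(a|s)$ be a policy on actions $a\in\{0,\dots,k-1\}$ and states $s\in\{1,\dots,d\}$, and let $M=(M^a)_{a}$ be a family of nonnegative $d\times d$ matrices with $M^a_{s+}:=\sum_{s'}M^a_{ss'}=\pi(a|s)$ for all $a,s$, and such that $M^+:=\sum_a M^a$ has all entries strictly positive. Then the following are equivalent: (1) every family $W=(W^a)_a$ of nonnegative $d\times d$ matrices with $W^a_{s+}=\pi(a|s)$ for all $a,s$, with $W^+:=\sum_a W^a$ entrywise strictly positive, and with $M^a\oslash M^+=W^a\oslash W^+$ for all $a$, satisfies $W=M$; (2) for every state $s$, the $k\times d$ matrix $(M^a_{ss'})_{a,s'}$ has rank $\ge d$ (i.e. rank $d$).
   Context: $M^a_{ss'}$ is interpreted as $\pi(a|s)\,p(s'|s,a)$ for a controlled Markov process, so $B^a:=M^a\oslash M^+$ is the inverse model $p(a|s,s')$. Here $\oslash$ denotes entrywise division of matrices, $[A\oslash B]_{ss'}=A_{ss'}/B_{ss'}$. *)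

From mathcomp Require Import all_boot all_order all_algebra.
Set Implicit Arguments. Unset Strict Implicit. Unset Printing Implicit Defensive.
Import Order.TTheory GRing.Theory Num.Theory.
Local Open Scope ring_scope.

Definition rowsum (R : realFieldType) (d : nat) (A : 'M[R]_d) (s : 'I_d) : R :=
  \sum_(s' < d) A s s'.

Definition mplus (R : realFieldType) (k d : nat) (M : 'I_k -> 'M[R]_d) : 'M[R]_d :=
  \sum_(a < k) M a.

Definition mxediv (R : realFieldType) (d : nat) (A B : 'M[R]_d) : 'M[R]_d :=
  \matrix_(i, j) (A i j / B i j).

Definition state_mx (R : realFieldType) (k d : nat) (M : 'I_k -> 'M[R]_d) (s : 'I_d)
  : 'M[R]_(k, d) := \matrix_(a, s') M a s s'.

Definition admissible (R : realFieldType) (k d : nat) (pi : 'I_k -> 'I_d -> R)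
  (M : 'I_k -> 'M[R]_d) : Prop :=
  [/\ (forall a i j, 0 <= M a i j),
      (forall a s, rowsum (M a) s = pi a s) &
      (forall i j, 0 < mplus M i j)].

From mathcomp Require Import all_boot all_order all_algebra.
From Stdlib Require Import FunctionalExtensionality.
Set Implicit Arguments. Unset Strict Implicit. Unset Printing Implicit Defensive.
Import Order.TTheory GRing.Theory Num.Theory.
Local Open Scope ring_scope.

(** Equal inverse models [M^a ⊘ M^+ = W^a ⊘ W^+] mean that [W] is [M] with
    every column [s'] of every row [s] rescaled by [C_{ss'} = W^+_{ss'} / M^+_{ss'}],
    the same factor for all actions [a].  Such a rescaling keeps the row sums
    [π(a|s)] iff, for each [s], the vector [C_{s·} - 1] lies in the kernel of
    [(M^a_{ss'})_{a,s'}].  Full column rank thus forces [C = 1], i.e. [W = M];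
    conversely a nonzero kernel vector, scaled down until [C > 0], yields an
    admissible [W ≠ M]. *)

Lemma full_col_rankP (F : fieldType) (m n : nat) (A : 'M[F]_(m, n)) :
  (n <= \rank A)%N <-> (forall v : 'rV[F]_n, v *m A^T = 0 -> v = 0).
Proof.
split=> [rkA v vA0 | A'inj].
- have A'free : row_free A^T.
    by rewrite /row_free mxrank_tr eqn_leq rkA andbT -mxrank_tr rank_leq_row.
  by apply/eqP; rewrite -(mulmx_free_eq0 _ A'free) vA0.
- by have := inj_row_free A'inj; rewrite /row_free mxrank_tr => /eqP ->.
Qed.

Lemma exists_pos_shift (R : realFieldType) (n : nat) (v : 'rV[R]_n) :
  exists2 e : R, 0 < e & forall j, 0 < 1 + e * v 0 j.
Proof.
set S := 1 + \sum_j `|v 0 j|.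
have S_gt0 : 0 < S by rewrite ltr_pwDl // sumr_ge0.
exists S^-1 => [|j]; first by rewrite invr_gt0.
have vj_lt : `|v 0 j| < S.
  by rewrite /S (bigD1 j) //= ltr_pwDl // lerDl sumr_ge0.
have -> : 1 + S^-1 * v 0 j = (S + v 0 j) / S.
  by rewrite mulrDl divff ?lt0r_neq0 // mulrC.
rewrite divr_gt0 // -ltrBlDl sub0r.
by move: vj_lt; rewrite ltr_norml => /andP[].
Qed.

Section Rescaling.

Variables (R : realFieldType) (k d : nat).
Implicit Types (M W : 'I_k -> 'M[R]_d) (C : 'M[R]_d).

Definition rescale M C (a : 'I_k) : 'M[R]_d := map2_mx *%R (M a) C.

Lemma mplusE M i j : mplus M i j = \sum_a M a i j.
Proof. by rewrite /mplus summxE. Qed.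

Lemma mplus_rescale M C : mplus (rescale M C) = map2_mx *%R (mplus M) C.
Proof.
apply/matrixP => i j; rewrite !mplusE mxE mplusE mulr_suml.
by apply: eq_bigr => a _; rewrite mxE.
Qed.

Lemma mxediv_rescale M C a : (forall i j, C i j != 0) ->
  mxediv (rescale M C a) (mplus (rescale M C)) = mxediv (M a) (mplus M).
Proof.
move=> C_neq0; apply/matrixP => i j.
by rewrite mplus_rescale !mxE invfM mulrACA divff // mulr1.
Qed.

Lemma rowsum_rescale M C a s :
  rowsum (rescale M C a) s = rowsum (M a) s + \sum_j M a s j * (C s j - 1).
Proof.
rewrite /rowsum -big_split /=; apply: eq_bigr => j _.
by rewrite mxE mulrBr mulr1 addrC subrK.
Qed.

Lemma rescale_idP M C : (forall i j, mplus M i j != 0) ->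
  rescale M C = M <-> C = const_mx 1.
Proof.
move=> Mp_neq0; split=> [MC_M | ->]; last first.
  by apply: functional_extensionality => a; rewrite /rescale map2_mx1.
apply/matrixP => i j; have := congr1 (fun M => mplus M i j) MC_M.
rewrite mplus_rescale !mxE -{2}[mplus M i j]mulr1.
by move/(mulfI (Mp_neq0 i j)).
Qed.

Lemma ediv_eq_rescale M W : (forall i j, mplus W i j != 0) ->
  (forall a, mxediv (M a) (mplus M) = mxediv (W a) (mplus W)) ->
  W = rescale M (mxediv (mplus W) (mplus M)).
Proof.
move=> Wp_neq0 MW; apply: functional_extensionality => a.
apply/matrixP => i j; have := congr1 (fun A : 'M[R]_d => A i j) (MW a).
rewrite !mxE -{2}(divfK (Wp_neq0 i j) (W a i j)) => <-.
by rewrite mulrAC mulrA.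
Qed.

Variable pi : 'I_k -> 'I_d -> R.

Lemma admissible_rescale M C : admissible pi M -> (forall i j, 0 < C i j) ->
  admissible pi (rescale M C) <->
  (forall a s, \sum_j M a s j * (C s j - 1) = 0).
Proof.
case=> M_ge0 rowsumM Mp_gt0 C_gt0; split.
- case=> _ rowsumMC _ a s; have := rowsum_rescale M C a s.
  by rewrite rowsumMC rowsumM => /esym/(canRL (addKr _)); rewrite addNr.
- move=> ker; split=> [a i j | a s | i j].
  + by rewrite mxE mulr_ge0 // ltW.
  + by rewrite rowsum_rescale ker addr0.
  + by rewrite mplus_rescale mxE mulr_gt0.
Qed.

Lemma state_mx_full_rankP M s :
  (d <= \rank (state_mx M s))%N <->
  (forall v : 'rV[R]_d, (forall a, \sum_j M a s j * v 0 j = 0) -> v = 0).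
Proof.
have mulE v a : (v *m (state_mx M s)^T) 0 a = \sum_j M a s j * v 0 j.
  by rewrite mxE; apply: eq_bigr => j _; rewrite !mxE mulrC.
apply: (iff_trans (full_col_rankP _)); split=> injM v vM0; apply: injM.
- by apply/rowP => a; rewrite mulE vM0 mxE.
- by move=> a; rewrite -mulE vM0 mxE.
Qed.

Lemma kernel_vector_rescale M s (v : 'rV[R]_d) : admissible pi M ->
    (forall a, \sum_j M a s j * v 0 j = 0) ->
  exists2 C : 'M[R]_d, (forall i j, 0 < C i j) /\ admissible pi (rescale M C)
           & (C = const_mx 1 -> v = 0).
Proof.
move=> hM vker; have [e e_gt0 shift_gt0] := exists_pos_shift v.
pose C := \matrix_(i, j) if i == s then 1 + e * v 0 j else 1.
have C_gt0 i j : 0 < C i j by rewrite mxE; case: eqP.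
exists C; first split=> //.
- apply/admissible_rescale => // a i; case: (eqVneq i s) => [-> | ns].
    under eq_bigr => j _ do rewrite mxE eqxx addrAC subrr add0r mulrCA.
    by rewrite -mulr_sumr vker mulr0.
  by rewrite big1 // => j _; rewrite mxE (negbTE ns) subrr mulr0.
- move=> /matrixP C1; apply/rowP => j; have := C1 s j.
  rewrite !mxE eqxx => /(canRL (addKr 1)); rewrite addNr => /eqP.
  by rewrite mulf_eq0 gt_eqF //= => /eqP.
Qed.

Lemma rescale_full_rank_eq1 M C : admissible pi M ->
    (forall s, (d <= \rank (state_mx M s))%N) ->
    (forall i j, 0 < C i j) -> admissible pi (rescale M C) ->
  C = const_mx 1.
Proof.
move=> hM Mrank C_gt0 /(admissible_rescale hM C_gt0) ker.
have C_row1 i : \row_j (C i j - 1) = 0.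
  apply: (state_mx_full_rankP M i).1 (Mrank i) _ _ => a.
  by under eq_bigr do rewrite mxE; exact: ker.
apply/matrixP => i j.
by have /rowP/(_ j)/eqP := C_row1 i; rewrite !mxE subr_eq0 => /eqP.
Qed.

End Rescaling.

Theorem proposition1 (R : realFieldType) (d k : nat)
  (hd : (1 <= d)%N) (hk : (1 <= k)%N)
  (pi : 'I_k -> 'I_d -> R)
  (hpi0 : forall a s, 0 <= pi a s)
  (hpi1 : forall s, \sum_(a < k) pi a s = 1)
  (M : 'I_k -> 'M[R]_d)
  (hM : admissible pi M) :
  (forall W : 'I_k -> 'M[R]_d,
     admissible pi W ->
     (forall a, mxediv (M a) (mplus M) = mxediv (W a) (mplus W)) ->
     W = M)
  <-> (forall s : 'I_d, (d <= \rank (state_mx M s))%N).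
Proof.
have Mp_neq0 i j : mplus M i j != 0 by case: hM => _ _ /(_ i j) /lt0r_neq0.
split=> [Muniq s | Mrank W hW MW].
- apply/state_mx_full_rankP => v /(kernel_vector_rescale hM)[C [C_gt0 MC_adm]].
  apply; apply/(rescale_idP _ Mp_neq0); apply: Muniq => // a.
  by rewrite mxediv_rescale // => i j; apply: lt0r_neq0.
- have Wp_neq0 i j : mplus W i j != 0 by case: hW => _ _ /(_ i j) /lt0r_neq0.
  have W_MC := ediv_eq_rescale Wp_neq0 MW.
  rewrite W_MC; apply/rescale_idP => //.
  apply: (rescale_full_rank_eq1 hM Mrank); last by rewrite -W_MC.
  by move=> i j; rewrite mxE divr_gt0 //; [case: hW | case: hM] => _ _ ->.
Qed.
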